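(* Let $X$ be an abelian metric group and let $f:X\to\mathbb{R}$ be a subadditive function. Suppose there exist a set $T\subset X$ and $k\in\mathbb{N}$ such that $f$ is bounded above on $T$ and the $k$-fold sum $\sum_{i=1}^k T=\{t_1+\dots+t_k: t_1,\dots,t_k\in T\}$ is shift-compact. Then $f$ is locally bounded at each point of $X$, i.e. every $x\in X$ has a neighbourhood on which $|f|$ is bounded.
   Context: An abelian metric group is an abelian topological group whose topology is given by an invariant metric. A function $f:X\to\mathbb{R}$ is subadditive if $f(x+y)\le f(x)+f(y)$ for all $x,y\in X$. A set $A\subset X$ is shift-compact if for every sequence $(x_n)_{n\in\mathbb{N}}$ tending to $0$ in $X$ there exists $x\in X$ such that the set $\{n\in\mathbb{N}: x+x_n\in A\}$ is infinite. *)

From HB Require Import structures.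
From mathcomp Require Import all_boot all_order all_algebra.
From mathcomp Require Import boolp classical_sets cardinality reals.
Set Implicit Arguments. Unset Strict Implicit. Unset Printing Implicit Defensive.
Import Order.TTheory GRing.Theory Num.Theory.
Local Open Scope ring_scope.
Local Open Scope classical_set_scope.

Definition is_metric (R : realType) (X : Type) (d : X -> X -> R) : Prop :=
  (forall x y, 0 <= d x y) /\
  (forall x y, d x y = 0 <-> x = y) /\
  (forall x y, d x y = d y x) /\
  (forall x y z, d x z <= d x y + d y z).

(* the metric is (translation-)invariant; X is abelian (zmodType), so
   (X, d) is an abelian metric group: the group operations are automatically
   continuous for the topology of an invariant metric. *)
Definition invariant_metric (R : realType) (X : zmodType) (d : X -> X -> R)
  : Prop := forall x y z, d (x + z) (y + z) = d x y.

Definition subadditive (R : realType) (X : zmodType) (f : X -> R) : Prop :=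
  forall x y, f (x + y) <= f x + f y.

Definition tends_to_zero (R : realType) (X : zmodType) (d : X -> X -> R)
  (u : nat -> X) : Prop :=
  forall e : R, 0 < e -> exists N : nat, forall n : nat, (N <= n)%N -> d (u n) 0 < e.

Definition shift_compact (R : realType) (X : zmodType) (d : X -> X -> R)
  (A : set X) : Prop :=
  forall u : nat -> X, tends_to_zero d u ->
    exists x : X, infinite_set [set n : nat | A (x + u n)].

Definition ksum (X : zmodType) (k : nat) (T : set X) : set X :=
  [set x | exists t : 'I_k -> X, (forall i, T (t i)) /\ x = \sum_(i < k) t i].

Definition bounded_above_on (R : realType) (X : Type) (f : X -> R) (T : set X)
  : Prop := exists M : R, forall t, T t -> f t <= M.

Definition locally_bounded_at (R : realType) (X : Type) (d : X -> X -> R)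
  (f : X -> R) (x : X) : Prop :=
  exists r : R, 0 < r /\ exists M : R, forall y, d x y < r -> `|f y| <= M.

(* Subadditivity bounds f on the k-fold sum of T by f 0 + k sup_T f, so it suffices that a
   subadditive f bounded above on a shift-compact set A is bounded above near 0.  Otherwise
   choose z_n -> 0 with f z_n > n; shift-compactness gives x with x + z_n in A for infinitely
   many n, and then f z_n <= f (x + z_n) + f (-x) <= sup_A f + f (-x), which is absurd.  Finally
   an upper bound C near 0 spreads by translation: f x - C <= f y <= f x + C for y near x. *)

From mathcomp Require Import all_boot all_order all_algebra.
From mathcomp Require Import boolp classical_sets cardinality reals.
From mathcomp Require Import lra.
Set Implicit Arguments. Unset Strict Implicit. Unset Printing Implicit Defensive.
Local Open Scope ring_scope.
Local Open Scope classical_set_scope.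
Import Order.TTheory GRing.Theory Num.Theory.

Lemma tends_to_zero_of_lt_inv (R : realType) (X : zmodType) (d : X -> X -> R)
    (u : nat -> X) :
  (forall n, d (u n) 0 < n.+1%:R^-1) -> tends_to_zero d u.
Proof.
move=> du e e_gt0; have inve_ge0 : 0 <= e^-1 by rewrite invr_ge0 ltW.
exists (Num.Def.archi_bound e^-1) => n le_bound_n.
apply: (lt_le_trans (du n)); rewrite -[e]invrK lef_pV2 ?posrE ?invr_gt0 ?ltr0Sn //.
by apply: (le_trans (ltW (archi_boundP inve_ge0))); rewrite ler_nat ltnW.
Qed.

Lemma unbounded_near0_seq (R : realType) (X : zmodType) (d : X -> X -> R)
    (f : X -> R) :
  ~ (exists2 r : R, 0 < r & bounded_above_on f [set y | d y 0 < r]) ->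
  exists2 z : nat -> X, tends_to_zero d z & forall n, n%:R < f (z n).
Proof.
move=> unbounded.
have witness n : exists y, d y 0 < n.+1%:R^-1 /\ n%:R < f y.
  apply: contrapT => no_y; apply: unbounded.
  exists n.+1%:R^-1; first by rewrite invr_gt0 ltr0Sn.
  exists n%:R => y dy; rewrite leNgt; apply/negP => fy; apply: no_y; by exists y.
have [z zP] := choice witness.
exists z => [|n]; last by case: (zP n).
by apply: tends_to_zero_of_lt_inv => n; case: (zP n).
Qed.

Section Subadditive.
Variables (R : realType) (X : zmodType) (f : X -> R).
Hypothesis f_subadd : subadditive f.

Lemma bounded_above_on_ksum (T : set X) (k : nat) :
  bounded_above_on f T -> bounded_above_on f (ksum k T).
Proof.
move=> [M fT]; exists (f 0 + k%:R * M) => _ [t [Tt ->]].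
elim: k t Tt => [|k IHk] t Tt; first by rewrite big_ord0 mul0r addr0.
rewrite big_ord_recr /= -natr1 mulrDl mul1r addrA.
apply: (le_trans (f_subadd _ _)); apply: lerD; last exact: fT.
exact: (IHk (fun i => t (widen_ord (leqnSn k) i))).
Qed.

Lemma subadditive_shift (x y : X) : f y <= f (x + y) + f (- x).
Proof. by rewrite -{1}(addKr x y) addrC; apply: f_subadd. Qed.

Lemma bounded_above_near0_of_shift_compact (d : X -> X -> R) (A : set X) :
  bounded_above_on f A -> shift_compact d A ->
  exists2 r : R, 0 < r & bounded_above_on f [set y | d y 0 < r].
Proof.
move=> [B fA] A_sc; apply: contrapT => /unbounded_near0_seq[z z_to0 fz_gt].
have [x x_inf] := A_sc z z_to0.
set b := `|B + f (- x)|.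
have [n [Axzn]] := infinite_setN0 (infinite_setD x_inf (finite_II (Num.Def.archi_bound b))).
move=> /negP; rewrite -leqNgt -(ler_nat R) => le_bound_n.
have := lt_trans (lt_le_trans (archi_boundP (normr_ge0 _)) le_bound_n) (fz_gt n).
apply/negP; rewrite -leNgt; apply: (le_trans (subadditive_shift x _)).
by apply: le_trans (ler_norm _); rewrite lerD2r fA.
Qed.

Variable d : X -> X -> R.
Hypotheses (d_sym : forall x y, d x y = d y x) (d_inv : invariant_metric d).

Lemma locally_bounded_of_bounded_above_near0 (r : R) :
  0 < r -> bounded_above_on f [set y | d y 0 < r] -> forall x, locally_bounded_at d f x.
Proof.
move=> r_gt0 [C fC] x; exists r; split => //; exists (`|f x| + `|C|) => y dxy.
have d_sub0 a b : d (a - b) 0 = d a b by rewrite -(d_inv _ _ b) addrNK add0r.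
have fy_le : f y <= f x + C.
  by rewrite -{1}(subrK x y) addrC; apply: (le_trans (f_subadd _ _));
     rewrite lerD2l fC //= d_sub0 d_sym.
have fy_ge : f x <= f y + C.
  by rewrite -{1}(subrK y x) addrC; apply: (le_trans (f_subadd _ _));
     rewrite lerD2l fC //= d_sub0.
have := ler_norm (f x); have := ler_norm (- f x); rewrite normrN; have := ler_norm C.
by rewrite ler_norml; lra.
Qed.

End Subadditive.

Theorem theorem2p2 (R : realType) (X : zmodType) (d : X -> X -> R)
  (f : X -> R) (T : set X) (k : nat) :
  is_metric d -> invariant_metric d ->
  subadditive f ->
  bounded_above_on f T ->
  shift_compact d (ksum k T) ->
  forall x : X, locally_bounded_at d f x.
Proof.
move=> [_ [_ [d_sym _]]] d_inv f_subadd fT sum_sc.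
have [r r_gt0 f_near0] := bounded_above_near0_of_shift_compact f_subadd
  (bounded_above_on_ksum f_subadd k fT) sum_sc.
exact: (locally_bounded_of_bounded_above_near0 f_subadd d_sym d_inv r_gt0 f_near0).
Qed.
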